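(* Let $n,m\ge 2$ and let $\mathsf{R}=(\mathsf{R}_1,\dots,\mathsf{R}_m)\in(0,1]^m$. Consider the game $\mathcal{G}_{\rm perfect}$ in which each of the $n$ players $P_1,\dots,P_n$ chooses a mixed strategy $s^{(i)}=(s^{(i)}_1,\dots,s^{(i)}_m)\in\Delta_m$ (a probability vector over the $m$ servers) and receives expected utility $$u_i(s^{(1)},\dots,s^{(n)})=\sum_{j=1}^m \mathsf{R}_j\,\frac{s^{(i)}_j}{\sum_{k=1}^n s^{(k)}_j},$$ where a term with vanishing denominator is taken to be $0$. Then $\mathcal{G}_{\rm perfect}$ has a unique Nash equilibrium, namely the symmetric profile $s^*=(s^{*(1)},\dots,s^{*(n)})$ with $s^{*(i)}=\mathsf{N}(\mathsf{R})$ for every $i\in[n]$.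
   Context: For a nonzero vector $v\in[0,\infty)^m$, $\mathsf{N}(v)=\big(v_1/\|v\|_1,\dots,v_m/\|v\|_1\big)$ denotes its $L_1$-normalization. $\Delta_m=\{x\in[0,1]^m:\sum_j x_j=1\}$. Interpretation: $\mathsf{R}_j$ is the trustworthiness (probability of correct behaviour) of server $j$, known to all players (perfect information); the utility is the expected reward when server $j$ yields a unit reward with probability $\mathsf{R}_j$, split among players in proportion to their endorsement probabilities of server $j$. (In the paper's full game players may also endorse other players, but such actions are dominated; the game above is the resulting game with actions restricted to the servers.) A Nash equilibrium is a profile of mixed strategies in which no player can increase her expected utility by unilaterally changing her strategy. *)

From HB Require Import structures.
From mathcomp Require Import all_boot all_order all_algebra.
From mathcomp Require Import reals.
Set Implicit Arguments. Unset Strict Implicit. Unset Printing Implicit Defensive.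
Import Order.TTheory GRing.Theory Num.Theory.
Local Open Scope ring_scope.

(* Mixed strategy profile: s i j = probability that player i endorses server j. *)
Definition profile (R : realType) (n m : nat) := 'I_n -> 'I_m -> R.

Definition in_simplex (R : realType) (m : nat) (x : 'I_m -> R) : Prop :=
  (forall j, 0 <= x j) /\ \sum_(j < m) x j = 1.

Definition L1normalize (R : realType) (m : nat) (v : 'I_m -> R) : 'I_m -> R :=
  fun j => v j / \sum_(k < m) `|v k|.

Definition utility (R : realType) (n m : nat) (Rv : 'I_m -> R)
  (s : profile R n m) (i : 'I_n) : R :=
  \sum_(j < m)
    (let d := \sum_(k < n) s k j in
     if d == 0 then 0 else Rv j * (s i j / d)).

Definition deviate (R : realType) (n m : nat) (s : profile R n m)
  (i : 'I_n) (t : 'I_m -> R) : profile R n m :=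
  fun k => if k == i then t else s k.

Definition is_nash (R : realType) (n m : nat) (Rv : 'I_m -> R)
  (s : profile R n m) : Prop :=
  (forall i, in_simplex (s i)) /\
  (forall i (t : 'I_m -> R), in_simplex t ->
     utility Rv (deviate s i t) i <= utility Rv s i).

From mathcomp Require Import all_boot all_order all_algebra.
From mathcomp Require Import boolp reals ring lra.
Import Order.TTheory GRing.Theory Num.Theory.
Set Implicit Arguments. Unset Strict Implicit. Unset Printing Implicit Defensive.
Local Open Scope ring_scope.

(* Let T_j be the total weight on server j, y_j = R_j / T_j its yield and f_ij = s_ij / T_j the
   fraction of it held by player i.  At an equilibrium every T_j is positive, since an empty server
   could be captured in full by shifting an arbitrarily small weight onto it.  Shifting a small
   weight from a server a with s_ia > 0 to any server b and letting it tend to 0 gives the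
   first-order condition y_b (1 - f_ib) <= y_a (1 - f_ia), whose left side is positive for some b
   because another player is active, so that f_ia < 1.  If y_a < y_b, the condition makes every
   player's fraction of a smaller than its fraction of b, contradicting that both sum to 1 over the
   players; so the yield is constant, and then the condition makes f_ij independent of j, i.e. s^(i) is
   proportional to R.  Conversely, at the symmetric profile the utility of a deviation is concave
   and its gradient is the constant (n-1) |R|_1 / n^2, so no deviation within the simplex pays. *)

Lemma sumr_gt0 (R : numDomainType) (m : nat) (v : 'I_m -> R) :
  (0 < m)%N -> (forall j, 0 < v j) -> 0 < \sum_(j < m) v j.
Proof.
move=> m_gt0 v_gt0; rewrite (bigD1 (Ordinal m_gt0)) //= ltr_pwDl //.
by apply: sumr_ge0 => j _; apply: ltW.
Qed.

Lemma sumr_split2 (V : nmodType) (m : nat) (F : 'I_m -> V) (a b : 'I_m) : a != b ->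
  \sum_(j < m) F j = F a + F b + \sum_(j < m | (j != a) && (j != b)) F j.
Proof. by move=> ab; rewrite (bigD1 a) //= (bigD1 b) 1?eq_sym //= addrA. Qed.

Lemma exists_other (n : nat) (i : 'I_n) : (1 < n)%N -> exists k : 'I_n, k != i.
Proof.
move=> n_gt1; have /card_gt1P [x [y [_ _ xy]]] : (1 < #|'I_n|)%N by rewrite card_ord.
by case: (eqVneq x i) => [<-|xi]; [exists y; rewrite eq_sym | exists x].
Qed.

Section ShareAlgebra.
Variable R : realFieldType.

Lemma ler_of_small_slack (A C K x : R) : 0 < x ->
  (forall e, 0 < e -> e < x -> A <= C + K * e) -> A <= C.
Proof.
move=> x_gt0 slack; apply/ler_addgt0Pr => eps eps_gt0.
have K1_gt0 : 0 < `|K| + 1 by rewrite ltr_wpDl.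
pose e := Num.min (x / 2) (eps / (`|K| + 1)).
have e_gt0 : 0 < e by rewrite lt_min !divr_gt0.
have e_lt_x : e < x by rewrite gt_min ltr_pdivrMr //; lra.
have Ke_le : K * e <= eps.
  have e_le : e * (`|K| + 1) <= eps by rewrite -ler_pdivlMr // ge_min lexx orbT.
  have := ler_norm K; have := normr_ge0 K; nra.
by apply: (le_trans (slack e e_gt0 e_lt_x)); rewrite lerD2l.
Qed.

Definition share (Rj x c : R) : R := if x + c == 0 then 0 else Rj * (x / (x + c)).

Lemma share_sub (Rj x y c : R) : 0 < x + c -> 0 < y + c ->
  share Rj y c - share Rj x c = Rj * c * (y - x) / ((x + c) * (y + c)).
Proof.
move=> x_gt0 y_gt0; rewrite /share !gt_eqF //.
by field; rewrite !gt_eqF.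
Qed.

Lemma share_le_tangent (Rj x q c : R) : 0 <= Rj -> 0 <= x -> 0 < q -> 0 < c ->
  share Rj x c <= share Rj q c + Rj * c / (q + c) ^+ 2 * (x - q).
Proof.
move=> Rj_ge0 x_ge0 q_gt0 c_gt0.
have xc_gt0 : 0 < x + c by lra.
have qc_gt0 : 0 < q + c by lra.
rewrite -subr_ge0.
have -> : share Rj q c + Rj * c / (q + c) ^+ 2 * (x - q) - share Rj x c =
    Rj * c * (x - q) ^+ 2 / ((x + c) * (q + c) ^+ 2).
  by rewrite /share !gt_eqF //; field; rewrite !gt_eqF.
apply: divr_ge0; first by rewrite mulr_ge0 ?sqr_ge0 // mulr_ge0 // ltW.
by rewrite mulr_ge0 ?exprn_ge0 // ltW.
Qed.

Lemma first_order_of_shift (Ra Rb xa ca xb cb : R) :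
  0 < xa -> 0 <= ca -> 0 < xb + cb ->
  (forall e, 0 < e -> e < xa ->
     share Rb (xb + e) cb - share Rb xb cb <= share Ra xa ca - share Ra (xa - e) ca) ->
  Rb * cb * (xa + ca) ^+ 2 <= Ra * ca * (xb + cb) ^+ 2.
Proof.
move=> xa_gt0 ca_ge0 Tb_gt0 shift.
apply: (ler_of_small_slack (K := Rb * cb * (xa + ca) + Ra * ca * (xb + cb)) xa_gt0).
move=> e e_gt0 e_lt_xa.
have Ta_gt0 : 0 < xa + ca by lra.
have Tae_gt0 : 0 < xa - e + ca by lra.
have Tbe_gt0 : 0 < xb + e + cb by lra.
have := shift e e_gt0 e_lt_xa.
rewrite (share_sub _ Tb_gt0) // (share_sub _ Tae_gt0) //.
have -> : xb + e - xb = e by ring.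
have -> : xa - (xa - e) = e by ring.
rewrite ler_pdivlMr ?mulr_gt0 // mulrAC ler_pdivrMr ?mulr_gt0 // => cross.
rewrite -subr_ge0 -(pmulr_rge0 _ e_gt0).
have -> : e * (Ra * ca * (xb + cb) ^+ 2 + (Rb * cb * (xa + ca) + Ra * ca * (xb + cb)) * e
    - Rb * cb * (xa + ca) ^+ 2) =
  Ra * ca * e * ((xb + cb) * (xb + e + cb)) - Rb * cb * e * ((xa - e + ca) * (xa + ca)) by ring.
by rewrite subr_ge0.
Qed.

Lemma nonpos_of_shift_to_empty (Ra Rb xa ca : R) : 0 < xa -> 0 <= ca ->
  (forall e, 0 < e -> e < xa ->
     share Rb e 0 - share Rb 0 0 <= share Ra xa ca - share Ra (xa - e) ca) ->
  Rb <= 0.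
Proof.
move=> xa_gt0 ca_ge0 shift.
have Ta_gt0 : 0 < xa + ca by lra.
suff : Rb * (xa + ca) ^+ 2 <= 0 by rewrite pmulr_lle0 // exprn_gt0.
apply: (ler_of_small_slack (K := Rb * (xa + ca) + Ra * ca) xa_gt0) => e e_gt0 e_lt_xa.
have Tae_gt0 : 0 < xa - e + ca by lra.
have := shift e e_gt0 e_lt_xa.
rewrite (share_sub _ Tae_gt0) // /share !addr0 eqxx gt_eqF // divff ?gt_eqF // mulr1 subr0.
have -> : xa - (xa - e) = e by ring.
rewrite ler_pdivlMr ?mulr_gt0 // => cross.
rewrite -subr_ge0.
have -> : 0 + (Rb * (xa + ca) + Ra * ca) * e - Rb * (xa + ca) ^+ 2 =
  Ra * ca * e - Rb * ((xa - e + ca) * (xa + ca)) by ring.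
by rewrite subr_ge0.
Qed.

End ShareAlgebra.

Lemma simplex_exists_gt0 (R : realType) (m : nat) (x : 'I_m -> R) :
  in_simplex x -> exists a, 0 < x a.
Proof.
move=> [x_ge0 sum_x].
have [a /andP [_ xa_gt0]] : exists a : 'I_m, true && (0 < x a).
  by apply: psumr_neq0P => [j _|]; [exact: x_ge0 | rewrite sum_x; exact/eqP/oner_neq0].
by exists a.
Qed.

Lemma simplex_proportional (R : realType) (m : nat) (x v : 'I_m -> R) (k : R) :
  in_simplex x -> (forall j, x j = k * v j) -> forall j, x j = v j / \sum_(l < m) v l.
Proof.
move=> [_ sum_x] x_prop j.
have sum_kv : k * \sum_(l < m) v l = 1 by rewrite mulr_sumr -sum_x; apply: eq_bigr.
have sum_v_neq0 : \sum_(l < m) v l != 0.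
  by apply: contra_eq_neq sum_kv => ->; rewrite mulr0 eq_sym oner_neq0.
by rewrite x_prop -[k](mulfK sum_v_neq0) sum_kv mul1r mulrC.
Qed.

Definition total (R : realType) (n m : nat) (s : profile R n m) (j : 'I_m) : R :=
  \sum_(k < n) s k j.

Definition others (R : realType) (n m : nat) (s : profile R n m) (i : 'I_n) (j : 'I_m) : R :=
  \sum_(k < n | k != i) s k j.

Section Utility.
Variables (R : realType) (n m : nat) (Rv : 'I_m -> R) (s : profile R n m).

Lemma total_split i j : total s j = s i j + others s i j.
Proof. exact: bigD1. Qed.

Lemma utility_share i :
  utility Rv s i = \sum_(j < m) share (Rv j) (s i j) (others s i j).
Proof. by apply: eq_bigr => j _; rewrite /share -total_split. Qed.

Lemma utility_deviate i t :
  utility Rv (deviate s i t) i = \sum_(j < m) share (Rv j) (t j) (others s i j).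
Proof.
apply: eq_bigr => j _; rewrite /= (bigD1 i) //= /deviate eqxx.
by congr share; apply: eq_bigr => k /negbTE ->.
Qed.

End Utility.

Lemma others_const (R : realType) (n m : nat) (x : 'I_m -> R) i j :
  others (fun _ : 'I_n => x) i j = (n%:R - 1) * x j.
Proof.
have := total_split (fun _ : 'I_n => x) i j.
rewrite /total sumr_const card_ord /= => tot.
by rewrite mulrBl mul1r mulr_natl tot addrC addKr.
Qed.

Lemma symmetric_nash (R : realType) (n m : nat) (Rv : 'I_m -> R) :
  (1 < n)%N -> (0 < m)%N -> (forall j, 0 < Rv j) ->
  is_nash Rv (fun _ : 'I_n => fun j => Rv j / \sum_(k < m) Rv k).
Proof.
move=> n_gt1 m_gt0 Rv_gt0.
set S := \sum_(k < m) Rv k; set q := fun j => Rv j / S.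
have S_gt0 : 0 < S := sumr_gt0 m_gt0 Rv_gt0.
have q_gt0 j : 0 < q j by rewrite divr_gt0.
have q_simplex : in_simplex q.
  by split=> [j|]; [exact: ltW | rewrite -mulr_suml divff ?gt_eqF].
have n1_gt0 : 0 < n%:R - 1 :> R by rewrite subr_gt0 ltr1n.
split=> // i t [t_ge0 sum_t].
rewrite utility_deviate utility_share -subr_le0 -sumrB.
pose slope := (n%:R - 1) * S / n%:R ^+ 2.
apply: (@le_trans _ _ (\sum_(j < m) slope * (t j - q j))); last first.
  by rewrite -mulr_sumr sumrB sum_t q_simplex.2 subrr mulr0.
apply: ler_sum => j _; rewrite others_const lerBlDl.
have -> : slope = Rv j * ((n%:R - 1) * q j) / (q j + (n%:R - 1) * q j) ^+ 2.
  rewrite /slope /q; field.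
  by rewrite !gt_eqF // ?ltr0n ?(ltnW n_gt1) // addr_gt0 ?mulr_gt0.
apply: share_le_tangent; [exact: ltW | exact: t_ge0 | exact: q_gt0 | exact: mulr_gt0].
Qed.

Section EquilibriumUniqueness.
Variables (R : realType) (n m : nat) (Rv : 'I_m -> R) (s : profile R n m).
Hypotheses (n_gt1 : (1 < n)%N) (Rv_gt0 : forall j, 0 < Rv j) (s_nash : is_nash Rv s).

Lemma nash_ge0 i j : 0 <= s i j.
Proof. exact: (s_nash.1 i).1. Qed.

Lemma nash_others_ge0 i j : 0 <= others s i j.
Proof. by apply: sumr_ge0 => k _; apply: nash_ge0. Qed.

Lemma nash_shift i a b e : a != b -> 0 < e -> e < s i a ->
  share (Rv b) (s i b + e) (others s i b) - share (Rv b) (s i b) (others s i b)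
  <= share (Rv a) (s i a) (others s i a) - share (Rv a) (s i a - e) (others s i a).
Proof.
move=> ab e_gt0 e_lt.
pose t j := if j == a then s i a - e else if j == b then s i b + e else s i j.
have [ta tb] : t a = s i a - e /\ t b = s i b + e.
  by rewrite /t !eqxx eq_sym (negbTE ab).
have t_other j : (j != a) && (j != b) -> t j = s i j.
  by move=> /andP [ja jb]; rewrite /t (negbTE ja) (negbTE jb).
have t_simplex : in_simplex t.
  split=> [j|].
    rewrite /t; case: ifP => _; first by have := e_lt; lra.
    by case: ifP => _; [have := nash_ge0 i b; lra | apply: nash_ge0].
  have [_ sum_s] := s_nash.1 i.
  rewrite (sumr_split2 _ ab) ta tb (eq_bigr _ t_other) -sum_s (sumr_split2 _ ab).
  by rewrite addrACA addNr addr0.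
have := s_nash.2 i t t_simplex.
rewrite utility_deviate utility_share !(sumr_split2 _ ab) ta tb.
rewrite (eq_bigr (fun j => share (Rv j) (s i j) (others s i j))); last by move=> j /t_other ->.
by rewrite lerD2r; lra.
Qed.

Lemma nash_total_gt0 b : 0 < total s b.
Proof.
have n_gt0 : (0 < n)%N := ltnW n_gt1.
pose i := Ordinal n_gt0.
have [a sia_gt0] := simplex_exists_gt0 (s_nash.1 i).
rewrite lt_def sumr_ge0 ?andbT => [|k _]; last exact: nash_ge0.
apply/eqP => total_b0.
have [sib0 others_b0] : s i b = 0 /\ others s i b = 0.
  move: total_b0; rewrite (total_split s i) => sum0.
  by have := nash_ge0 i b; have := nash_others_ge0 i b; split; lra.
have ab : a != b by apply: contraTneq sia_gt0 => ->; rewrite sib0 ltxx.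
suff : Rv b <= 0 by rewrite leNgt Rv_gt0.
apply: (nonpos_of_shift_to_empty (Ra := Rv a) sia_gt0 (nash_others_ge0 i a)).
by move=> e e_gt0 e_lt; have := nash_shift ab e_gt0 e_lt; rewrite sib0 others_b0 add0r.
Qed.

Lemma nash_first_order i a b : 0 < s i a ->
  Rv b * others s i b * total s a ^+ 2 <= Rv a * others s i a * total s b ^+ 2.
Proof.
move=> sia_gt0; have [<-|ab] := eqVneq a b; first by [].
have := nash_total_gt0 b; rewrite !(total_split s i) => Tb_gt0.
apply: first_order_of_shift sia_gt0 (nash_others_ge0 i a) Tb_gt0 _.
by move=> e e_gt0 e_lt; apply: nash_shift.
Qed.

Lemma nash_marginal i a b : 0 < s i a ->
  Rv b / total s b * (1 - s i b / total s b) <= Rv a / total s a * (1 - s i a / total s a).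
Proof.
move=> sia_gt0.
have marginal j : Rv j / total s j * (1 - s i j / total s j) = Rv j * others s i j / total s j ^+ 2.
  have Tj_neq0 : s i j + others s i j != 0 by rewrite -total_split gt_eqF ?nash_total_gt0.
  by rewrite (total_split s i); field.
have Tsq_gt0 j : 0 < total s j ^+ 2 by rewrite exprn_gt0 // nash_total_gt0.
rewrite !marginal ler_pdivrMr // mulrAC ler_pdivlMr //.
exact: nash_first_order.
Qed.

Lemma nash_fraction_lt1 i a : 0 < s i a -> s i a / total s a < 1.
Proof.
move=> sia_gt0.
have [k ki] := exists_other i n_gt1.
have [j skj_gt0] := simplex_exists_gt0 (s_nash.1 k).
have others_j_gt0 : 0 < others s i j.
  rewrite /others (bigD1 k) //= ltr_pwDl // sumr_ge0 // => l _; exact: nash_ge0.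
have marginal_j_gt0 : 0 < Rv j / total s j * (1 - s i j / total s j).
  rewrite mulr_gt0 ?divr_gt0 ?nash_total_gt0 // subr_gt0 ltr_pdivrMr ?nash_total_gt0 //.
  by rewrite mul1r (total_split s i) ltrDl.
have := lt_le_trans marginal_j_gt0 (nash_marginal j sia_gt0).
by rewrite pmulr_rgt0 ?divr_gt0 ?nash_total_gt0 // subr_gt0.
Qed.

Lemma nash_yield_le a b : Rv b / total s b <= Rv a / total s a.
Proof.
rewrite leNgt; apply/negP => yield_lt.
have fraction_lt i : 0 < s i a -> s i a / total s a < s i b / total s b.
  move=> sia_gt0.
  have slack_a : 0 < 1 - s i a / total s a by rewrite subr_gt0 nash_fraction_lt1.
  have : Rv b / total s b * (1 - s i b / total s b) < Rv b / total s b * (1 - s i a / total s a).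
    by apply: le_lt_trans (nash_marginal b sia_gt0) _; rewrite ltr_pM2r.
  by rewrite ltr_pM2l ?divr_gt0 ?nash_total_gt0 // ltrD2l ltrN2.
have fraction_le i : s i a / total s a <= s i b / total s b.
  have [sia_gt0|] := ltrP 0 (s i a); first exact/ltW/fraction_lt.
  rewrite le_eqVlt ltNge nash_ge0 orbF => /eqP ->.
  by rewrite mul0r divr_ge0 ?nash_ge0 // ltW ?nash_total_gt0.
have [i /andP [_ sia_gt0]] : exists i, true && (0 < s i a).
  apply: psumr_neq0P => [k _|]; first exact: nash_ge0.
  exact/eqP/lt0r_neq0/nash_total_gt0.
have : \sum_(k < n) s k a / total s a < \sum_(k < n) s k b / total s b.
  rewrite (bigD1 i) //= [X in _ < X](bigD1 i) //=.
  by apply: ltr_leD; [exact: fraction_lt | apply: ler_sum => k _; exact: fraction_le].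
by rewrite -!mulr_suml !divff ?ltxx // gt_eqF ?nash_total_gt0.
Qed.

Lemma nash_yield_eq a b : Rv a / total s a = Rv b / total s b.
Proof. by apply/le_anti; rewrite !nash_yield_le. Qed.

Lemma nash_fraction_le i a b : 0 < s i a -> s i a / total s a <= s i b / total s b.
Proof.
move=> sia_gt0; have := nash_marginal b sia_gt0.
by rewrite (nash_yield_eq b a) ler_pM2l ?divr_gt0 ?nash_total_gt0 // lerD2l lerN2.
Qed.

Lemma nash_fraction_eq i a b : s i a / total s a = s i b / total s b.
Proof.
have [c sic_gt0] := simplex_exists_gt0 (s_nash.1 i).
have sij_gt0 j : 0 < s i j.
  have := lt_le_trans (divr_gt0 sic_gt0 (nash_total_gt0 c)) (nash_fraction_le j sic_gt0).
  by rewrite pmulr_lgt0 // invr_gt0 nash_total_gt0.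
by apply/le_anti; rewrite !nash_fraction_le ?sij_gt0.
Qed.

Lemma nash_eq_normalize i j : s i j = Rv j / \sum_(k < m) Rv k.
Proof.
have [c _] := simplex_exists_gt0 (s_nash.1 i).
apply: (simplex_proportional (k := s i c / Rv c) (s_nash.1 i)) => b.
have ratio d : s i d / Rv d = (s i d / total s d) / (Rv d / total s d).
  by field; rewrite !gt_eqF ?nash_total_gt0.
by rewrite ratio (nash_fraction_eq i c b) (nash_yield_eq c b) -ratio divfK ?gt_eqF.
Qed.

End EquilibriumUniqueness.

Theorem mainTheorem1 (R : realType) (n m : nat) (Rv : 'I_m -> R) :
  (2 <= n)%N -> (2 <= m)%N ->
  (forall j, 0 < Rv j <= 1) ->
  (is_nash Rv (fun _ : 'I_n => L1normalize Rv) /\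
   forall s : profile R n m, is_nash Rv s -> s = (fun _ : 'I_n => L1normalize Rv)).
Proof.
move=> n_gt1 m_gt1 Rv_bounds.
(* Only the positivity of the trustworthiness values matters. *)
have Rv_gt0 j : 0 < Rv j by case/andP: (Rv_bounds j).
have -> : L1normalize Rv = fun j => Rv j / \sum_(k < m) Rv k.
  apply: funext => j; congr (_ / _).
  by apply: eq_bigr => k _; rewrite gtr0_norm.
split; first exact: symmetric_nash n_gt1 (ltnW m_gt1) Rv_gt0.
move=> s s_nash; apply: funext => i.
by apply: funext => j; apply: nash_eq_normalize n_gt1 Rv_gt0 s_nash i j.
Qed.
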